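(* Let $X=\{x_1,\dots,x_n\}$ and $Z=\{z_1,\dots,z_n\}$ be sets equipped with symmetric non-negative functions $d_X\colon X\times X\to\mathbb{R}^+$ and $d_Z\colon Z\times Z\to\mathbb{R}^+$, and let $f_\bullet\colon X\to Z$ be the bijection $x_i\mapsto z_i$. Then for all $a,b\in\mathbb{R}^+$, \[ \sum_{b'\in\mathbb{R}^+}\mathcal{M}^0_f(a,b')=m^X(a)\qquad\text{and}\qquad\sum_{a'\in\mathbb{R}^+}\mathcal{M}^0_f(a',b)=m^Z(b). \]
   Context: $\mathbb{R}^+=[0,\infty)$; the functions $d_X,d_Z$ may vanish on distinct points and need not satisfy the triangle inequality. For a finite set $Y=\{y_1,\dots,y_n\}$ with symmetric non-negative $d_Y$ and $r\ge 0$, let $G_r(Y)$ be the graph on $Y$ with an edge $[y,y']$ ($y\ne y'$) whenever $d_Y(y,y')\le r$ (for $r>0$ this is the Vietoris–Rips graph $\mathrm{VR}_r(Y)$; $\mathrm{VR}_0(Y)$ has no edges). $H_0(\mathrm{VR}_0(Y))$ is the $\mathbb{Z}_2$-vector space with basis $[y_1],\dots,[y_n]$. For $b\ge0$, $\ker^+_b(Y)$ is the span of all $[y]+[y']$ with $y,y'$ in the same connected component of $G_b(Y)$; $\ker^-_0(Y)=0$ and for $b>0$, $\ker^-_b(Y)$ is the span of all $[y]+[y']$ with $y,y'$ in the same component of $G_r(Y)$ for some $0\le r<b$. For $j\in\{2,\dots,n\}$ the death value $b_j$ of $y_j$ is the least $r\ge0$ such that $y_j$ is in the same component of $G_r(Y)$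 as some $y_i$ with $i<j$; for $a\ge 0$, $m^Y(a)$ is the number of $j\in\{2,\dots,n\}$ with $b_j=a$. $f_0\colon H_0(\mathrm{VR}_0(X))\to H_0(\mathrm{VR}_0(Z))$ is the linear isomorphism $[x_i]\mapsto[z_i]$, and \[ \mathcal{M}^0_f(a,b)=\dim\frac{f_0(\ker^+_a(X))\cap\ker^+_b(Z)}{f_0(\ker^-_a(X))\cap\ker^+_b(Z)+f_0(\ker^+_a(X))\cap\ker^-_b(Z)},\quad a,b\in\mathbb{R}^+. \] (Only finitely many terms of each sum are nonzero.) *)

From HB Require Import structures.
From mathcomp Require Import all_boot all_order all_algebra.
From Stdlib Require Import ClassicalEpsilon.
Set Implicit Arguments. Unset Strict Implicit. Unset Printing Implicit Defensive.
Import Order.TTheory GRing.Theory Num.Theory.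
Local Open Scope ring_scope.

Definition pbool (P : Prop) : bool :=
  if excluded_middle_informative P then true else false.

Section Defs.
Variable R : realFieldType.
Variable n : nat.

(* Points y_1..y_n are indexed by 'I_n (0-based). *)
Definition Gedge (d : 'I_n -> 'I_n -> R) (r : R) : rel 'I_n :=
  fun i j => (i != j) && (d i j <= r).

Definition samecomp (d : 'I_n -> 'I_n -> R) (r : R) (i j : 'I_n) : bool :=
  connect (Gedge d r) i j.

(* H_0(VR_0(Y)) = Z_2^n, [y_i] = i-th standard basis row vector. *)
Definition gen (i : 'I_n) : 'rV['F_2]_n := delta_mx 0 i.

Definition kerp (d : 'I_n -> 'I_n -> R) (b : R) : 'M['F_2]_n :=
  (\sum_(i : 'I_n) \sum_(j : 'I_n | samecomp d b i j) <<gen i + gen j>>)%MS.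

Definition samecomp_below (d : 'I_n -> 'I_n -> R) (b : R) (i j : 'I_n) : bool :=
  pbool (exists r : R, 0 <= r /\ r < b /\ samecomp d r i j).

Definition kerm (d : 'I_n -> 'I_n -> R) (b : R) : 'M['F_2]_n :=
  if b == 0 then 0 else
  (\sum_(i : 'I_n) \sum_(j : 'I_n | samecomp_below d b i j)
     <<gen i + gen j>>)%MS.

(* f_0 : [x_i] |-> [z_i]; in the standard bases it is the identity matrix.
   The image of a subspace A under f_0 is (A *m f0)%MS. *)
Definition f0 : 'M['F_2]_n := 1%:M.

(* dim (U / W) for W <= U is \rank U - \rank W. *)
Definition M0 (dX dZ : 'I_n -> 'I_n -> R) (a b : R) : nat :=
  let A := (kerp dX a *m f0)%MS in
  let C := (kerm dX a *m f0)%MS in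
  let B := kerp dZ b in
  let D := kerm dZ b in
  (\rank (A :&: B)%MS - \rank ((C :&: B) + (A :&: D))%MS)%N.

(* death value: b is the least r >= 0 such that y_j is in the same component
   of G_r(Y) as some y_i with i < j *)
Definition death_pred (d : 'I_n -> 'I_n -> R) (j : 'I_n) (r : R) : Prop :=
  exists i : 'I_n, (i < j)%N /\ samecomp d r i j.

Definition is_death (d : 'I_n -> 'I_n -> R) (j : 'I_n) (b : R) : Prop :=
  [/\ 0 <= b, death_pred d j b & forall r, 0 <= r -> death_pred d j r -> b <= r].

(* m^Y(a): number of j in {2..n} (0-based: j >= 1) with b_j = a *)
Definition mult (d : 'I_n -> 'I_n -> R) (a : R) : nat :=
  #|[set j : 'I_n | (0 < j)%N && pbool (is_death d j a)]|.

End Defs.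

(* "sum_{x in R^+} F x = v", where only finitely many terms are nonzero:
   there is a duplicate-free finite list of nonnegative reals containing
   every x >= 0 with F x <> 0, and the sum over it is v. *)
Definition has_fsum (R : realFieldType) (F : R -> nat) (v : nat) : Prop :=
  exists s : seq R,
    [/\ uniq s, all (fun x => 0 <= x) s,
        (forall x, 0 <= x -> F x != 0%N -> x \in s)
      & (\sum_(x <- s) F x)%N = v].

From HB Require Import structures.
From mathcomp Require Import all_boot all_order all_algebra.
From Stdlib Require Import ClassicalEpsilon.
From mathcomp Require Import zify.
Import Order.TTheory GRing.Theory Num.Theory.
Local Open Scope ring_scope.
Set Implicit Arguments. Unset Strict Implicit. Unset Printing Implicit Defensive.

(* For r >= 0, ker^+_r(Y) is spanned by the vectors [y_j] + [y_m], where y_m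
   is the point of least index in the component of y_j in G_r(Y) and j ranges
   over the points with b_j <= r. These vectors are independent, hence
   dim ker^+_r = #{j | b_j <= r} and m^Y(a) = dim ker^+_a - dim ker^-_a.
   Fix a, let A = ker^+_a(X), C = ker^-_a(X), and let 0 = B_0 <= B_1 <= ... be
   the spaces ker^+_b(Z) at the successive critical values b of d_Z, so that
   ker^-_b(Z) is the previous space of the chain. Then M^0_f(a, b) vanishes off
   the critical values and equals rank(A :&: B_(k+1) + C) - rank(A :&: B_k + C) at
   the k-th one; these increments telescope to rank A - rank C = m^X(a). The
   second identity is the first one with X and Z exchanged. *)

Lemma pboolP (P : Prop) : reflect P (pbool P).
Proof. by rewrite /pbool; case: excluded_middle_informative; constructor. Qed.

Lemma addrr_F2 n (v : 'rV['F_2]_n) : v + v = 0.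
Proof. by apply/rowP => j; rewrite !mxE addrr_pchar2 // pchar_Fp. Qed.

Lemma lt_sorted_le_index disp (T : orderType disp) (s : seq T) x y :
  sorted <%O s -> x \in s -> y \in s -> (x <= y)%O = (index x s <= index y s)%N.
Proof.
move=> s_sorted xs ys; rewrite -{1}(nth_index x xs) -{1}(nth_index x ys).
by apply: lt_sorted_leq_nth; rewrite // inE index_mem.
Qed.

Section SubquotientRank.
Variables (F : fieldType) (m : nat).
Implicit Types A B C D : 'M[F]_m.

(* Both sides compute dim (A :&: D) / (C :&: D + A :&: B); on the right the
   quotient is taken after adding C, which meets A :&: D only in C :&: D. *)
Lemma mxrank_subquotient A C B D : (C <= A)%MS -> (B <= D)%MS ->
  (\rank (A :&: D) - \rank (C :&: D + A :&: B) =
   \rank (A :&: D + C) - \rank (A :&: B + C))%N.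
Proof.
move=> sCA sBD; set W := (C :&: D + A :&: B)%MS.
have sCD_W : (C :&: D <= W)%MS by rewrite addsmxSl.
have sW : (W <= A :&: D)%MS.
  by rewrite addsmx_sub !sub_capmx (submx_trans (capmxSl _ _)) ?capmxSr ?capmxSl
             ?(submx_trans (capmxSr _ _) sBD).
have capA : (A :&: D :&: C :=: C :&: D)%MS.
  by rewrite capmxC capmxA; apply: cap_eqmx (capmx_idPl sCA) (eqmx_refl D).
have capW : (W :&: C :=: C :&: D)%MS.
  apply/eqmxP; rewrite !sub_capmx sCD_W capmxSl capmxSr.
  by rewrite (submx_trans (capmxSl _ _) (submx_trans sW (capmxSr _ _))).
have addW : (W + C :=: A :&: B + C)%MS.
  apply/eqmxP; rewrite !addsmx_sub !addsmxSr addsmxSl andbT /=.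
  by rewrite (submx_trans (capmxSl _ _) (addsmxSr _ _))
             (submx_trans (addsmxSr (C :&: D)%MS _) (addsmxSl _ _)).
have := mxrank_sum_cap (A :&: D)%MS C; have := mxrank_sum_cap W C.
rewrite capA capW addW; lia.
Qed.

Lemma sum_mxrank_subquotients A C (B : nat -> 'M[F]_m) N :
  (C <= A)%MS -> B 0%N = 0 -> (forall i, (i < N)%N -> (B i <= B i.+1)%MS) ->
  (A <= B N)%MS ->
  (\sum_(i < N) (\rank (A :&: B i.+1) - \rank (C :&: B i.+1 + A :&: B i)))%N =
  (\rank A - \rank C)%N.
Proof.
move=> sCA B0 sB sAB; pose h i := \rank (A :&: B i + C)%MS.
rewrite (eq_bigr (fun i : 'I_N => h i.+1 - h i)%N); last first.
  by move=> i _; apply: mxrank_subquotient => //; apply: sB.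
rewrite -(big_mkord xpredT (fun i => h i.+1 - h i)%N).
rewrite telescope_sumn_in //; last first.
  by move=> i /andP[_ /sB sBi]; apply: mxrankS; rewrite addsmxS ?capmxS.
rewrite /h B0 capmx0 adds0mx; congr (_ - _)%N; apply: eqmx_rank.
rewrite addsmx_sub capmxSl sCA (submx_trans _ (addsmxSl _ _)) //.
by rewrite sub_capmx submx_refl.
Qed.
End SubquotientRank.

Lemma mxrank_sum_delta_pairs (F : fieldType) n (D : {set 'I_n}) f :
  {in D, forall j, f j \notin D} ->
  \rank (\sum_(j in D) <<delta_mx 0 j + delta_mx 0 (f j) : 'rV[F]_n>>)%MS = #|D|.
Proof.
move=> fD; set S := (\sum_(j in D) _)%MS; apply/eqP; rewrite eqn_leq.
apply/andP; split.
  apply: leq_trans (mxrank_sum_leqif _).1 _ => /=; rewrite -sum1_card.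
  by apply: leq_sum => j _; rewrite mxrank_gen rank_leq_row.
pose P : 'M[F]_n := diag_mx (\row_k ((k \in D)%:R : F)).
have projP j : j \in D ->
    (delta_mx 0 j + delta_mx 0 (f j) : 'rV[F]_n) *m P = delta_mx 0 j.
  move=> jD; rewrite mul_mx_diag; apply/rowP => k; rewrite !mxE eqxx /=.
  have [->|_] := eqVneq k j.
    have /negPf-> : j != f j by apply: contraNneq (fD j jD) => <-.
    by rewrite jD addr0 mulr1.
  have [->|_] := eqVneq k (f j); last by rewrite add0r mul0r.
  by rewrite (negPf (fD j jD)) mulr0.
have /mxdirectP /= rank_deltas :
    mxdirect (\sum_(j in D) <<delta_mx 0 j : 'rV[F]_n>>).
  exact: (@mxdirect_delta F _ _ n id).
apply: leq_trans (mxrankM_maxl S P).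
rewrite -sum1_card.
rewrite (eq_bigr (fun j => \rank <<delta_mx 0 j : 'rV[F]_n>>)%MS); last first.
  by move=> j _; rewrite mxrank_gen mxrank_delta.
rewrite -rank_deltas; apply: mxrankS; apply/sumsmx_subP => j jD.
by rewrite genmxE -(projP j jD) submxMr // (sumsmx_sup j) ?genmxE.
Qed.

Section Distances.
Variables (R : realFieldType) (n : nat) (d : 'I_n -> 'I_n -> R).
Implicit Types (r t b : R) (i j : 'I_n).

Definition dead r : {set 'I_n} :=
  [set j : 'I_n | [exists i : 'I_n, (i < j)%N && samecomp d r i j]].

Lemma death_predP j r : death_pred d j r <-> j \in dead r.
Proof.
rewrite inE; split=> [[i [lt_ij cij]]|/existsP[i /andP[lt_ij cij]]]; last by exists i.
by apply/existsP; exists i; rewrite lt_ij.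
Qed.

Lemma dead_gt0 j r : j \in dead r -> (0 < j)%N.
Proof. by rewrite inE => /existsP[i /andP[lt_ij _]]; apply: leq_ltn_trans lt_ij. Qed.

Lemma samecompW r r' : (forall i j, d i j <= r -> d i j <= r') ->
  subrel (samecomp d r) (samecomp d r').
Proof.
move=> le_rr'; apply: connect_sub => i j /andP[neq_ij /le_rr' le_ij].
by apply: connect1; rewrite /Gedge neq_ij le_ij.
Qed.

Lemma deadW r r' : (forall i j, d i j <= r -> d i j <= r') ->
  dead r \subset dead r'.
Proof.
move=> le_rr'; apply/subsetP => j; rewrite !inE => /existsP[i /andP[lt_ij cij]].
by apply/existsP; exists i; rewrite lt_ij (samecompW le_rr').
Qed.

Lemma samecomp_total r : (forall i j, d i j <= r) -> forall i j, samecomp d r i j.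
Proof.
move=> le_r i j; have [<-|neq_ij] := eqVneq i j; first exact: connect0.
by apply: connect1; rewrite /Gedge neq_ij le_r.
Qed.

Section ComponentMinimum.
Hypothesis d_sym : forall i j, d i j = d j i.
Variable r : R.
Local Notation c := (samecomp d r).

Lemma samecomp_sym : symmetric c.
Proof. by apply: sym_connect_sym => i j; rewrite /Gedge eq_sym d_sym. Qed.

Definition comp_min j : 'I_n := [arg min_(i < j | c j i) (i : nat)].

Lemma comp_minP j : c j (comp_min j) /\ forall i, c j i -> (comp_min j <= i)%N.
Proof. by rewrite /comp_min; case: arg_minnP; first exact: connect0. Qed.

Lemma comp_min_eq i j : c i j -> comp_min i = comp_min j.
Proof.
move=> cij; have [ci min_i] := comp_minP i; have [cj min_j] := comp_minP j.
apply/val_inj/anti_leq; rewrite min_i ?min_j //; last exact: connect_trans cij cj.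
by rewrite samecomp_sym in cij; apply: connect_trans cij ci.
Qed.

Lemma dead_comp_min j : (j \in dead r) = (comp_min j != j).
Proof.
have [cj min_j] := comp_minP j; rewrite inE; apply/existsP/idP.
  case=> i /andP[lt_ij cij]; apply: contraTneq lt_ij => <-.
  by rewrite -leqNgt min_j // samecomp_sym.
move=> neq_j; exists (comp_min j); rewrite samecomp_sym cj andbT ltn_neqAle neq_j.
by rewrite min_j //; exact: connect0.
Qed.

Lemma comp_min_notin_dead j : comp_min j \notin dead r.
Proof.
by rewrite dead_comp_min negbK -(comp_min_eq (proj1 (comp_minP j))).
Qed.

Lemma kerp_span :
  (kerp d r == \sum_(j in dead r) <<gen j + gen (comp_min j)>>)%MS.
Proof.
set S := (\sum_(j in dead r) _)%MS.
have sub_S j : ((gen j + gen (comp_min j))%R <= S)%MS.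
  have [jD|] := boolP (j \in dead r).
    by apply: (sumsmx_sup j) => //; rewrite genmxE submx_refl.
  by rewrite dead_comp_min negbK => /eqP->; rewrite addrr_F2 sub0mx.
apply/andP; split; apply/sumsmx_subP => i.
  move=> _; apply/sumsmx_subP => j cij; rewrite genmxE.
  have -> : gen i + gen j =
            (gen i + gen (comp_min i)) + (gen j + gen (comp_min j)).
    by rewrite (comp_min_eq cij) addrACA addrr_F2 addr0.
  by rewrite addmx_sub ?sub_S.
move=> _; rewrite genmxE (sumsmx_sup i) // (sumsmx_sup (comp_min i)) ?genmxE //.
by case: (comp_minP i).
Qed.

Lemma mxrank_kerp : \rank (kerp d r) = #|dead r|.
Proof.
rewrite (eqmx_rank kerp_span); apply: mxrank_sum_delta_pairs => j _.
exact: comp_min_notin_dead.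
Qed.

End ComponentMinimum.

Lemma kerpS (d' : 'I_n -> 'I_n -> R) r r' :
  subrel (samecomp d r) (samecomp d' r') -> (kerp d r <= kerp d' r')%MS.
Proof.
move=> sub_c; apply/sumsmx_subP => i _; apply/sumsmx_subP => j cij.
by apply: (sumsmx_sup i) => //; apply: (sumsmx_sup j) => //; apply: sub_c.
Qed.

Lemma kerp_gap t b : t <= b -> (forall i j, d i j <= b -> d i j <= t) ->
  kerp d b = kerp d t.
Proof.
move=> le_tb gap; rewrite /kerp; apply: eq_bigr => i _; apply: eq_bigl => j.
apply/idP/idP; first exact: samecompW.
by apply: samecompW => x y /le_trans; apply.
Qed.

Lemma kerm_gap t b : 0 <= t < b -> (forall i j, d i j < b -> d i j <= t) ->
  kerm d b = kerp d t.
Proof.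
case/andP=> ge0_t lt_tb gap; rewrite /kerm gt_eqF ?(le_lt_trans ge0_t) //.
apply: eq_bigr => i _; apply: eq_bigl => j; apply/pboolP/idP.
  case=> r [_ [lt_rb cij]]; apply: samecompW cij => x y le_r.
  by apply: gap; apply: le_lt_trans lt_rb.
by move=> cij; exists t.
Qed.

Definition prev_dist b : R :=
  \big[Num.max/0]_(p : 'I_n * 'I_n | d p.1 p.2 < b) d p.1 p.2.

Lemma prev_dist_ge0 b : 0 <= prev_dist b.
Proof. exact: bigmax_ge_id. Qed.

Lemma prev_dist_lt b : 0 < b -> prev_dist b < b.
Proof. by move=> gt0_b; apply: bigmax_lt. Qed.

Lemma le_prev_dist b i j : d i j < b -> d i j <= prev_dist b.
Proof.
exact: (@le_bigmax_cond _ _ _ 0 (i, j) (fun p => d p.1 p.2 < b)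
                                      (fun p => d p.1 p.2)).
Qed.

Lemma kerm_prev_dist b : 0 < b -> kerm d b = kerp d (prev_dist b).
Proof.
move=> gt0_b; apply: kerm_gap; first by rewrite prev_dist_ge0 prev_dist_lt.
exact: le_prev_dist.
Qed.

Lemma kerm_sub_kerp b : 0 <= b -> (kerm d b <= kerp d b)%MS.
Proof.
rewrite le_eqVlt => /predU1P[<-|gt0_b]; first by rewrite /kerm eqxx sub0mx.
rewrite kerm_prev_dist //; apply/kerpS/samecompW => i j /le_trans; apply.
exact/ltW/prev_dist_lt.
Qed.

Lemma kerm_off_dist b : 0 < b -> (forall i j, d i j != b) -> kerm d b = kerp d b.
Proof.
move=> gt0_b neq_b; rewrite kerm_prev_dist //.
rewrite (kerp_gap (ltW (prev_dist_lt gt0_b))) //.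
by move=> i j; rewrite le_eqVlt (negPf (neq_b i j)) => /le_prev_dist.
Qed.

Lemma is_death0 j : is_death d j 0 <-> j \in dead 0.
Proof. by split=> [[_ /death_predP] //|/death_predP d0_j]; split. Qed.

Lemma is_death_gt0 j a : 0 < a ->
  is_death d j a <-> j \in dead a :\: dead (prev_dist a).
Proof.
move=> gt0_a; rewrite in_setD; split.
  case=> _ /death_predP -> min_a; rewrite andbT; apply/negP => /death_predP.
  by move/(min_a _ (prev_dist_ge0 a)); rewrite leNgt prev_dist_lt.
case/andP=> not_dead_prev dead_a; split; [exact: ltW | exact/death_predP |].
move=> r ge0_r /death_predP dead_r; rewrite leNgt.
apply: contra not_dead_prev => lt_ra.
apply: (subsetP (deadW _)) dead_r => k l le_r.
by apply: le_prev_dist; apply: le_lt_trans lt_ra.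
Qed.

Lemma mult_rank (d_sym : forall i j, d i j = d j i) a : 0 <= a ->
  mult d a = (\rank (kerp d a) - \rank (kerm d a))%N.
Proof.
rewrite mxrank_kerp // le_eqVlt => /predU1P[<-|gt0_a].
  rewrite /kerm eqxx mxrank0 subn0 /mult; apply: eq_card => j; rewrite inE.
  apply/andP/idP => [[_ /pboolP/is_death0] //|d0_j].
  by split; [exact: dead_gt0 d0_j | exact/pboolP/is_death0].
have sub_dead : dead (prev_dist a) \subset dead a.
  by apply: deadW => i j /le_trans; apply; exact/ltW/prev_dist_lt.
rewrite kerm_prev_dist // mxrank_kerp // -(setIidPr sub_dead) -cardsD /mult.
apply: eq_card => j; rewrite inE; apply/andP/idP.
  by case=> _ /pboolP/(is_death_gt0 _ gt0_a).
move=> dj; split; last exact/pboolP/(is_death_gt0 _ gt0_a).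
by move: dj; rewrite in_setD => /andP[_ /dead_gt0].
Qed.

Definition critical_values : seq R :=
  sort <=%R (undup (0 :: [seq d p.1 p.2 | p : 'I_n * 'I_n])).

Lemma mem_critical_values x : (x \in critical_values) =
  (x == 0) || [exists p : 'I_n * 'I_n, d p.1 p.2 == x].
Proof.
rewrite mem_sort mem_undup inE; congr (_ || _).
by apply/imageP/existsP => [[p _ ->]|[p /eqP <-]]; exists p.
Qed.

Lemma critical_values_uniq : uniq critical_values.
Proof. by rewrite sort_uniq undup_uniq. Qed.

Lemma critical_values_sorted : sorted <%R critical_values.
Proof. by rewrite sort_lt_sorted undup_uniq. Qed.

Lemma critical0 : 0 \in critical_values.
Proof. by rewrite mem_critical_values eqxx. Qed.

Lemma critical_dist i j : d i j \in critical_values.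
Proof.
by rewrite mem_critical_values; apply/orP; right; apply/existsP; exists (i, j).
Qed.

Lemma le_critical_last i j :
  d i j <= critical_values`_(size critical_values).-1.
Proof.
have N_gt0 : (0 < size critical_values)%N by case: critical_values critical0.
rewrite (lt_sorted_le_index critical_values_sorted) ?critical_dist //;
  last by rewrite mem_nth ?prednK.
rewrite index_uniq ?prednK ?critical_values_uniq //.
by rewrite -ltnS prednK // index_mem critical_dist.
Qed.

Section NonnegativeDistances.
Hypothesis d_ge0 : forall i j, 0 <= d i j.

Lemma critical_values_ge0 x : x \in critical_values -> 0 <= x.
Proof. by rewrite mem_critical_values => /orP[/eqP->|/existsP[p /eqP<-]]. Qed.

Lemma kerm_critical (i : nat) : (i < size critical_values)%N ->
  kerm d critical_values`_i =
  if i is i'.+1 then kerp d critical_values`_i' else 0.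
Proof.
have s_sorted := critical_values_sorted; have s_uniq := critical_values_uniq.
case: i => [|i] lt_iN /=.
  suff -> : critical_values`_0 = 0 by rewrite /kerm eqxx.
  apply/le_anti; rewrite critical_values_ge0 ?mem_nth // andbT.
  by rewrite (lt_sorted_le_index s_sorted) ?mem_nth ?critical0 ?index_uniq.
have lt_iN' := ltnW lt_iN.
apply: kerm_gap => [|k l].
  rewrite critical_values_ge0 ?mem_nth //=.
  by rewrite (lt_sorted_ltn_nth 0 s_sorted) ?inE.
rewrite ltNge !(lt_sorted_le_index s_sorted) ?mem_nth ?critical_dist //.
by rewrite !index_uniq // -ltnNge ltnS.
Qed.

End NonnegativeDistances.
End Distances.

Section PersistenceSums.
Variables (R : realFieldType) (n : nat) (dX dZ : 'I_n -> 'I_n -> R).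

Lemma M0E a b : M0 dX dZ a b =
  (\rank (kerp dX a :&: kerp dZ b)
   - \rank (kerm dX a :&: kerp dZ b + kerp dX a :&: kerm dZ b))%N.
Proof. by rewrite /M0 /f0 !mulmx1. Qed.

Lemma M0_row_sum (dX_sym : forall i j, dX i j = dX j i)
    (dZ_ge0 : forall i j, 0 <= dZ i j) a :
  0 <= a -> has_fsum (fun b => M0 dX dZ a b) (mult dX a).
Proof.
move=> ge0_a; set s := critical_values dZ.
exists s; split.
- exact: critical_values_uniq.
- by apply/allP => x; apply: critical_values_ge0.
- move=> x ge0_x; apply: contraR; rewrite mem_critical_values negb_or.
  case/andP=> neq0_x /existsPn off_x.
  have gt0_x : 0 < x by rewrite lt_def neq0_x.
  have neq_x i j : dZ i j != x by apply: (off_x (i, j)).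
  by rewrite M0E (kerm_off_dist gt0_x neq_x) subn_eq0 mxrankS ?addsmxSr.
pose B i := if i is i'.+1 then kerp dZ s`_i' else 0.
rewrite mult_rank // (big_nth 0) big_mkord.
rewrite -(@sum_mxrank_subquotients _ _ _ _ B (size s)).
- by apply: eq_bigr => i _; rewrite M0E kerm_critical.
- exact: kerm_sub_kerp.
- by [].
- move=> i lt_iN; rewrite /B -kerm_critical //; apply: kerm_sub_kerp.
  exact: critical_values_ge0 dZ_ge0 _ (mem_nth 0 lt_iN).
- have N_gt0 : (0 < size s)%N.
    by rewrite -has_predT; apply/hasP; exists 0; first exact: critical0.
  rewrite /B -(prednK N_gt0); apply/kerpS => i j _; apply: samecomp_total.
  exact: le_critical_last.
Qed.

End PersistenceSums.

Lemma M0C (R : realFieldType) n (dX dZ : 'I_n -> 'I_n -> R) a b :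
  M0 dX dZ a b = M0 dZ dX b a.
Proof. by rewrite !M0E !(capmxC (kerp dX a)) (capmxC (kerm dX a)) addsmxC. Qed.

Lemma eq_has_fsum (R : realFieldType) (F G : R -> nat) v :
  F =1 G -> has_fsum F v -> has_fsum G v.
Proof.
move=> eqFG [s [s_uniq s_ge0 s_supp s_sum]]; exists s; split=> //.
  by move=> x ge0_x; rewrite -eqFG; apply: s_supp.
by rewrite -s_sum; apply: eq_bigr => x _; rewrite eqFG.
Qed.

Theorem lemma3 (R : realFieldType) (n : nat) (dX dZ : 'I_n -> 'I_n -> R)
  (dX_sym : forall i j, dX i j = dX j i) (dX_ge0 : forall i j, 0 <= dX i j)
  (dZ_sym : forall i j, dZ i j = dZ j i) (dZ_ge0 : forall i j, 0 <= dZ i j)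
  (a b : R) (ha : 0 <= a) (hb : 0 <= b) :
  has_fsum (fun b' => M0 dX dZ a b') (mult dX a) /\
  has_fsum (fun a' => M0 dX dZ a' b) (mult dZ b).
Proof.
split; first exact: M0_row_sum.
apply: eq_has_fsum (M0_row_sum dZ_sym dX_ge0 hb) => a'.
by rewrite M0C.
Qed.
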